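(* Let $(t_j^i)_{0\le j\le i}$ be real numbers and let $h_{j,k}^i$ ($0\le k\le i$, $0\le j\le i-k$) be defined by $h_{j,0}^i=t_j^i$ and $h_{j,k}^i=h_{j,k-1}^{i-1}+h_{j,k-1}^{i}+h_{j+1,k-1}^{i}$ for $k\ge 1$. If $t_j^i=t_{i-j}^i$ for all $0\le j\le i$, then $h_{j,k}^i=h_{i-(j+k),k}^i$ for all $0\leq k \leq i$, $0\leq j \leq i-k$. *)

From Stdlib Require Import Reals Arith.
Open Scope R_scope.

(* t i j  stands for t_j^i.
   h t i j k stands for h_{j,k}^i, defined by
     h_{j,0}^i = t_j^i,
     h_{j,k}^i = h_{j,k-1}^{i-1} + h_{j,k-1}^i + h_{j+1,k-1}^i  (k >= 1).
   The function is total on nat; only values with 0 <= k <= i, 0 <= j <= i-k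
   are meaningful, and these only depend on t_j^i with 0 <= j <= i. *)
Fixpoint h (t : nat -> nat -> R) (i j k : nat) : R :=
  match k with
  | O => t i j
  | S k' => h t (i - 1)%nat j k' + h t i j k' + h t i (S j) k'
  end.

(* With j' = i - (j + k), the induction hypothesis at level
   k - 1 identifies the three terms of the recurrence for h^i_{j,k} with those
   for h^i_{j',k}: h^{i-1}_{j,k-1} with h^{i-1}_{j',k-1} (row i - 1), while
   h^i_{j,k-1} and h^i_{j+1,k-1} are the mirror images of h^i_{j'+1,k-1} and
   h^i_{j',k-1}, i.e. the last two terms are exchanged. *)
From Stdlib Require Import Reals Arith Lia.
Open Scope R_scope.

Definition h_level_symmetric (t : nat -> nat -> R) (k : nat) : Prop :=
  forall i j : nat, (k <= i)%nat -> (j <= i - k)%nat ->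
    h t i j k = h t i (i - (j + k))%nat k.

Lemma h_level_symmetric_0 (t : nat -> nat -> R) :
  (forall i j : nat, (j <= i)%nat -> t i j = t i (i - j)%nat) ->
  h_level_symmetric t 0.
Proof.
  intros Ht i j _ Hj; simpl.
  rewrite Nat.add_0_r; apply Ht; lia.
Qed.

Lemma h_level_symmetric_S (t : nat -> nat -> R) (k : nat) :
  h_level_symmetric t k -> h_level_symmetric t (S k).
Proof.
  intros IHk i j Hk Hj; simpl.
  set (j' := (i - (j + S k))%nat).
  assert (E_prev : h t (i - 1) j k = h t (i - 1) j' k).
  { replace j' with (i - 1 - (j + k))%nat by (unfold j'; lia).
    apply IHk; lia. }
  assert (E_left : h t i j k = h t i (S j') k).
  { replace (S j') with (i - (j + k))%nat by (unfold j'; lia).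
    apply IHk; lia. }
  assert (E_right : h t i (S j) k = h t i j' k).
  { replace j' with (i - (S j + k))%nat by (unfold j'; lia).
    apply IHk; lia. }
  rewrite E_prev, E_left, E_right; ring.
Qed.

Theorem theorem5 (t : nat -> nat -> R) :
  (forall i j : nat, (j <= i)%nat -> t i j = t i (i - j)%nat) ->
  forall i k j : nat, (k <= i)%nat -> (j <= i - k)%nat ->
    h t i j k = h t i (i - (j + k))%nat k.
Proof.
  intros Ht i k.
  assert (Hsym : h_level_symmetric t k).
  { induction k as [|k IHk].
    - exact (h_level_symmetric_0 t Ht).
    - exact (h_level_symmetric_S t k IHk). }
  exact (Hsym i).
Qed.
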